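(* Let $0=t_0<\dots<t_N=T$, $\tau_k=t_k-t_{k-1}$, $r_k=\tau_k/\tau_{k-1}$ ($2\le k\le N$). Let $r_{\max}\approx4.8645$ be the positive root of $x^3=(2x+1)^2$, fix $\delta\in(0,r_{\max})$ and assume $r_2>0$ and $0<r_k\le r_{\max}-\delta$ for $3\le k\le N$. Then the DOC kernels $\theta^{(n)}_{n-k}$ ($n\ge2$) are positive definite; more precisely, for any real sequence $\{\omega_j\}_{j=1}^n$ and $2\le n\le N$, $$2\sum_{k=2}^n\omega_k\sum_{j=2}^k\theta^{(k)}_{k-j}\omega_j\ge C_r\delta\sum_{k=2}^n\tau_k^{-1}\Big(\sum_{j=2}^k\theta^{(k)}_{k-j}\omega_j\Big)^2,$$ where $C_r=\sqrt{r_{\max}}/(1+r_{\max})^2$.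
   Context: BDF2 kernels: $b^{(1)}_0=1/\tau_1$; for $n\ge2$, $b^{(n)}_0=\frac{1+2r_n}{\tau_n(1+r_n)}$, $b^{(n)}_1=-\frac{r_n^2}{\tau_n(1+r_n)}$, $b^{(n)}_j=0$ for $2\le j\le n-1$. The discrete orthogonal convolution (DOC) kernels $\theta^{(n)}_{n-j}$ ($1\le j\le n$) are defined by $\sum_{j=k}^n\theta^{(n)}_{n-j}b^{(j)}_{j-k}=\delta_{nk}$ (Kronecker delta) for all $1\le k\le n$. *)

From mathcomp Require Import all_boot all_order all_algebra.
From mathcomp Require Import reals.
Set Implicit Arguments. Unset Strict Implicit. Unset Printing Implicit Defensive.
Import Order.TTheory GRing.Theory Num.Theory.
Local Open Scope ring_scope.

Definition dstep {R : realType} (t : nat -> R) (k : nat) : R := t k - t k.-1.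

Definition step_ratio {R : realType} (t : nat -> R) (k : nat) : R :=
  dstep t k / dstep t k.-1.

(* BDF2 kernels b^{(n)}_i  (b^{(n)}_j = 0 for j >= 2; b^{(1)}_j, j>=1, is
   never used and set to 0) *)
Definition bdf2 {R : realType} (t : nat -> R) (n i : nat) : R :=
  if n == 1%N then (if i == 0%N then (dstep t 1)^-1 else 0)
  else if i == 0%N then (1 + 2 * step_ratio t n) / (dstep t n * (1 + step_ratio t n))
  else if i == 1%N then - (step_ratio t n ^+ 2) / (dstep t n * (1 + step_ratio t n))
  else 0.

Definition Cr {R : realType} (rmax : R) : R := Num.sqrt rmax / (1 + rmax) ^+ 2.

(* Put v_k = sum_(j=2..k) theta^(k)_(k-j) omega_j.  Orthogonality makes the
   DOC kernels a left, hence two-sided, inverse of the triangular BDF2 kernel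
   matrix, so omega_2 = b^(2)_0 v_2 and omega_k = b^(k)_0 v_k + b^(k)_1 v_(k-1).
   With s = sqrt r_max, K = s^3 / (1 + s^2) and C = C_r delta, the identity
   s^3 = 2 s^2 + 1 makes
     2 omega_k v_k - K v_k^2 / tau_k + (K - C) v_(k-1)^2 / tau_(k-1)
   a positive semidefinite quadratic form whenever 0 < r_k <= r_max - delta
   (and 2 omega_2 v_2 >= K v_2^2 / tau_2), so summing over k telescopes to
   2 sum omega_k v_k >= C sum v_k^2 / tau_k + (K - C) v_n^2 / tau_n. *)

From mathcomp Require Import all_boot all_order all_algebra.
From mathcomp Require Import reals.
Import Order.TTheory GRing.Theory Num.Theory.
From mathcomp Require Import ring lra zify.
Set Implicit Arguments. Unset Strict Implicit. Unset Printing Implicit Defensive.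
Local Open Scope ring_scope.

Lemma exchange_big_nat_triangular (V : nmodType) (m n : nat)
    (G : nat -> nat -> V) :
  \sum_(m <= j < n) \sum_(m <= l < j.+1) G j l
    = \sum_(m <= l < n) \sum_(l <= j < n) G j l.
Proof.
elim: n => [|n IHn]; first by rewrite !big_geq.
have [le_mn | lt_nm] := leqP m n; last by rewrite !big_geq.
rewrite [LHS]big_nat_recr //= IHn [RHS]big_nat_recr //= big_nat1.
rewrite big_nat_recr //= addrA; congr (_ + _).
rewrite -big_split; apply: eq_big_nat => l /andP[_ lt_ln].
by rewrite big_nat_recr // ltnW.
Qed.

Section DOCInversion.

Variables (F : fieldType) (b theta : nat -> nat -> F) (m N : nat).

Hypothesis doc_orthogonal : forall n k, (m <= k <= n)%N -> (n <= N)%N ->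
  \sum_(k <= j < n.+1) theta n (n - j) * b j (j - k) = (n == k)%:R.

Definition doc_conv (u : nat -> F) (n : nat) : F :=
  \sum_(m <= j < n.+1) theta n (n - j) * u j.

Definition kernel_conv (u : nat -> F) (n : nat) : F :=
  \sum_(m <= j < n.+1) b n (n - j) * u j.

Lemma kernel_convK (u : nat -> F) (n : nat) :
  (m <= n <= N)%N -> doc_conv (kernel_conv u) n = u n.
Proof.
case/andP=> le_mn le_nN; rewrite /doc_conv /kernel_conv.
under eq_bigr do rewrite mulr_sumr.
rewrite exchange_big_nat_triangular.
transitivity (\sum_(m <= l < n.+1) (n == l)%:R * u l).
  apply: eq_big_nat => l /andP[le_ml lt_ln].
  rewrite -doc_orthogonal ?le_ml // big_distrl.
  by apply: eq_bigr => j _; rewrite mulrA.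
rewrite big_nat_recr //= eqxx mul1r big1_seq ?add0r // => l /andP[_].
by rewrite mem_index_iota => /andP[_ lt_ln]; rewrite gtn_eqF ?mul0r.
Qed.

Lemma doc_convK (u : nat -> F) (n : nat) :
  (m <= n <= N)%N -> kernel_conv (doc_conv u) n = u n.
Proof.
elim/ltn_ind: n => n IHn /andP[le_mn le_nN].
(* [doc_conv] is triangular with diagonal [theta n 0 != 0] and, by
   [kernel_convK], annihilates [kernel_conv (doc_conv u) - u]. *)
have theta_n0 : theta n 0 != 0.
  apply/eqP => theta0; have := @doc_orthogonal n n.
  rewrite le_mn leqnn big_nat1 subnn eqxx theta0 mul0r => /(_ isT le_nN) /eqP.
  by rewrite eq_sym oner_eq0.
pose w := kernel_conv (doc_conv u).
have : doc_conv (fun j => w j - u j) n = 0.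
  rewrite /doc_conv; under eq_bigr do rewrite mulrBr.
  by rewrite sumrB -/(doc_conv w n) kernel_convK ?le_mn // subrr.
rewrite /doc_conv big_nat_recr //= big1_seq ?add0r => [|j /andP[_]]; last first.
  rewrite mem_index_iota => /andP[le_mj lt_jn].
  by rewrite /w IHn ?subrr ?mulr0 // le_mj (leq_trans (ltnW lt_jn)).
by rewrite subnn => /eqP; rewrite mulf_eq0 (negbTE theta_n0) subr_eq0 => /eqP.
Qed.

End DOCInversion.

Lemma telescoping_sum_ge (R : realDomainType) (K C : R) (x a : nat -> R)
    (m n : nat) :
  (m <= n)%N -> K * a m <= x m ->
  (forall k, (m < k <= n)%N -> K * a k - (K - C) * a k.-1 <= x k) ->
  C * \sum_(m <= k < n.+1) a k + (K - C) * a n <= \sum_(m <= k < n.+1) x k.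
Proof.
move=> + x_m; elim: n => [|n IHn].
  by rewrite leqn0 => /eqP m0 _; subst m; rewrite !big_nat1 mulrBl; lra.
rewrite leq_eqVlt ltnS => /orP[/eqP<- _|le_mn x_k].
  by rewrite !big_nat1 mulrBl; lra.
have x_Sn := x_k n.+1 ltac:(lia).
have := IHn le_mn (fun k lt_mk_le_kn => x_k k ltac:(lia)).
rewrite !(big_nat_recr n.+1) //= ?leqW // !mulrDr !mulrBl in x_Sn *; lra.
Qed.

Section QuadraticForms.

Variables (R : realFieldType) (s : R).
Hypotheses (s_gt0 : 0 < s) (s_root : s ^+ 3 = 2 * s ^+ 2 + 1).

(* [s] stands for [Num.sqrt rmax] (see [sqrtr_cubic_root]), so that
   [C * delta] is the constant [Cr rmax * delta] of the theorem. *)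
Local Notation K := (s ^+ 3 / (1 + s ^+ 2)).
Local Notation C := (s / (1 + s ^+ 2) ^+ 2).

Let s2_gt0 : 0 < 1 + s ^+ 2. Proof. by rewrite ltr_wpDr ?sqr_ge0. Qed.

Lemma coercivity_le_energy_const (d : R) : d <= s ^+ 2 -> C * d <= K.
Proof.
move=> le_ds; rewrite -subr_ge0.
have -> : K - C * d = s * (s ^+ 2 * (1 + s ^+ 2) - d) / (1 + s ^+ 2) ^+ 2.
  by field; rewrite gt_eqF.
apply: divr_ge0; last exact: sqr_ge0.
apply: mulr_ge0; first exact: ltW.
have : 0 <= s ^+ 2 * s ^+ 2 by rewrite mulr_ge0 ?sqr_ge0.
lra.
Qed.

Lemma root_poly_ge0 (r : R) : 0 <= r <= s ^+ 2 ->
  0 <= s * (1 + s ^+ 2) * (2 + 4 * r) - r ^+ 2 * (1 + s ^+ 2) - s ^+ 4 * (1 + r).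
Proof.
case/andP=> r_ge0 le_rs; rewrite -(pmulr_rge0 _ s_gt0).
have -> : s * (s * (1 + s ^+ 2) * (2 + 4 * r) - r ^+ 2 * (1 + s ^+ 2)
                - s ^+ 4 * (1 + r))
    = (s ^+ 2 - r) * (s * (1 + s ^+ 2) * r + 1)
      - (s ^+ 3 - 2 * s ^+ 2 - 1) * (s ^+ 2 + r * (2 * s ^+ 2 + 1)) by ring.
have -> : s ^+ 3 - 2 * s ^+ 2 - 1 = 0 by rewrite s_root; ring.
rewrite mul0r subr0 mulr_ge0 ?subr_ge0 //.
by rewrite addr_ge0 // !mulr_ge0 // ?addr_ge0 ?sqr_ge0 // ltW.
Qed.

Lemma bdf2_first_quadratic_ge (r tau v : R) : 0 < r -> 0 < tau ->
  K * (tau^-1 * v ^+ 2) <= 2 * ((1 + 2 * r) / (tau * (1 + r)) * v * v).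
Proof.
move=> r_gt0 tau_gt0.
have r1_gt0 : 0 < 1 + r by lra.
rewrite -subr_ge0.
have -> : 2 * ((1 + 2 * r) / (tau * (1 + r)) * v * v) - K * (tau^-1 * v ^+ 2)
    = (2 * (1 + 2 * r) * (1 + s ^+ 2) - s ^+ 3 * (1 + r)) * v ^+ 2
      / (tau * (1 + r) * (1 + s ^+ 2)).
  by field; rewrite !gt_eqF.
rewrite s_root; apply: divr_ge0; last by rewrite ltW // !mulr_gt0.
rewrite mulr_ge0 ?sqr_ge0 //.
have : 0 <= r * s ^+ 2 by rewrite mulr_ge0 ?sqr_ge0 // ltW.
lra.
Qed.

Lemma bdf2_step_quadratic_ge (d r tau' v v' : R) :
    0 < d -> 0 < r -> r <= s ^+ 2 - d -> 0 < tau' ->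
  K * ((r * tau')^-1 * v ^+ 2) - (K - C * d) * (tau'^-1 * v' ^+ 2)
    <= 2 * (((1 + 2 * r) / (r * tau' * (1 + r)) * v
             + - r ^+ 2 / (r * tau' * (1 + r)) * v') * v).
Proof.
move=> d_gt0 r_gt0 le_rsd tau'_gt0.
have r1_gt0 : 0 < 1 + r by lra.
pose i := (1 + s ^+ 2)^-1.
pose P := s * (1 + s ^+ 2) * (2 + 4 * r) - r ^+ 2 * (1 + s ^+ 2)
          - s ^+ 4 * (1 + r).
rewrite -subr_ge0.
have -> : 2 * (((1 + 2 * r) / (r * tau' * (1 + r)) * v
               + - r ^+ 2 / (r * tau' * (1 + r)) * v') * v)
          - (K * ((r * tau')^-1 * v ^+ 2) - (K - C * d) * (tau'^-1 * v' ^+ 2))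
    = (P * i * v ^+ 2 + r ^+ 2 * (v - s * v') ^+ 2
       + s ^+ 2 * r * i * (s ^+ 2 - r - d * i * (1 + r)) * v' ^+ 2)
      / (s * (r * tau') * (1 + r)).
  by rewrite /P /i; field; rewrite !gt_eqF.
have i_gt0 : 0 < i by rewrite invr_gt0.
have P_ge0 : 0 <= P by apply: root_poly_ge0; lra.
have i_r1_le1 : i * (1 + r) <= 1.
  by rewrite mulrC ler_pdivrMr // mul1r; have := sqr_ge0 s; lra.
have : d * (i * (1 + r)) <= d by rewrite ler_piMr // ltW.
rewrite mulrA => dir_le_d.
have gap_ge0 : 0 <= s ^+ 2 - r - d * i * (1 + r) by lra.
apply: divr_ge0; last by rewrite ltW // !mulr_gt0.
have r_ge0 := ltW r_gt0; have i_ge0 := ltW i_gt0.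
rewrite !addr_ge0 //; first exact/mulr_ge0/sqr_ge0/mulr_ge0.
  exact/mulr_ge0/sqr_ge0/sqr_ge0.
exact/mulr_ge0/sqr_ge0/mulr_ge0/gap_ge0/mulr_ge0/i_ge0/mulr_ge0/r_ge0/sqr_ge0.
Qed.

End QuadraticForms.

Lemma sqrtr_cubic_root (R : rcfType) (x : R) : 0 <= x ->
  x ^+ 3 = (2 * x + 1) ^+ 2 -> Num.sqrt x ^+ 3 = 2 * Num.sqrt x ^+ 2 + 1.
Proof.
move=> x_ge0; rewrite -{1 2}(sqr_sqrtr x_ge0); set s := Num.sqrt x.
have s_ge0 : 0 <= s by rewrite sqrtr_ge0.
have -> : (s ^+ 2) ^+ 3 = (s ^+ 3) ^+ 2 by rewrite -!exprM.
move/eqP; rewrite eqf_sqr => /orP[/eqP //|/eqP s3E].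
have : 0 < s ^+ 3 + (2 * s ^+ 2 + 1).
  by rewrite ltr_wpDl ?exprn_ge0 // ltr_wpDl ?mulr_ge0 ?sqr_ge0.
by rewrite s3E addNr ltxx.
Qed.

Lemma Cr_sqr (R : realType) (s : R) :
  0 <= s -> Cr (s ^+ 2) = s / (1 + s ^+ 2) ^+ 2.
Proof. by move=> s_ge0; rewrite /Cr sqrtr_sqr ger0_norm. Qed.

Section BDF2.

Variables (R : realType) (t : nat -> R).

Lemma bdf2_ge2 (n i : nat) : (2 <= i)%N -> bdf2 t n i = 0.
Proof. by move=> le2i; rewrite -(subnKC le2i) /bdf2 /= if_same. Qed.

Lemma bdf2_kernel_conv_first (u : nat -> R) :
  kernel_conv (bdf2 t) 2 u 2 = bdf2 t 2 0 * u 2%N.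
Proof. exact: big_nat1. Qed.

Lemma bdf2_kernel_conv_step (u : nat -> R) (k : nat) : (3 <= k)%N ->
  kernel_conv (bdf2 t) 2 u k = bdf2 t k 0 * u k + bdf2 t k 1 * u k.-1.
Proof.
case: k => // k le3k; rewrite /kernel_conv (big_nat_recr k.+1); last exact: ltnW.
rewrite (big_nat_recr k) //= subnn subSnn.
rewrite big1_seq => [|j /andP[_]]; first by rewrite add0r; exact: addrC.
rewrite mem_index_iota => /andP[_ lt_jk].
by rewrite bdf2_ge2 ?mul0r // (subSn (ltnW lt_jk)) -(subnSK lt_jk).
Qed.

End BDF2.

Section BDF2Energy.

Variables (R : realType) (s : R) (t : nat -> R).
Hypotheses (s_gt0 : 0 < s) (s_root : s ^+ 3 = 2 * s ^+ 2 + 1).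

Local Notation K := (s ^+ 3 / (1 + s ^+ 2)).
Local Notation C := (s / (1 + s ^+ 2) ^+ 2).

Lemma bdf2_energy_first (v : R) : 0 < step_ratio t 2 -> 0 < dstep t 2 ->
  K * ((dstep t 2)^-1 * v ^+ 2) <= 2 * (bdf2 t 2 0 * v * v).
Proof. exact: bdf2_first_quadratic_ge. Qed.

Lemma bdf2_energy_step (d v v' : R) (k : nat) :
    (2 <= k)%N -> 0 < d -> 0 < dstep t k.-1 ->
    0 < step_ratio t k <= s ^+ 2 - d ->
  K * ((dstep t k)^-1 * v ^+ 2) - (K - C * d) * ((dstep t k.-1)^-1 * v' ^+ 2)
    <= 2 * ((bdf2 t k 0 * v + bdf2 t k 1 * v') * v).
Proof.
case: k => [|[|k]] // _ d_gt0 tau_gt0 /andP[r_gt0 le_r].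
have tauE : dstep t k.+2 = step_ratio t k.+2 * dstep t k.+1.
  by rewrite /step_ratio divfK // gt_eqF.
by rewrite /bdf2 /= tauE; apply: bdf2_step_quadratic_ge.
Qed.

End BDF2Energy.

Theorem mainTheorem5 (R : realType) (N : nat) (T : R) (t : nat -> R)
  (rmax delta : R) (theta : nat -> nat -> R)
  (ht0 : t 0%N = 0) (htN : t N = T)
  (ht : forall k : nat, (1 <= k <= N)%N -> t k.-1 < t k)
  (hrmax0 : 0 < rmax) (hrmax : rmax ^+ 3 = (2 * rmax + 1) ^+ 2)
  (hdelta0 : 0 < delta) (hdelta1 : delta < rmax)
  (hr2 : (2 <= N)%N -> 0 < step_ratio t 2)
  (hr : forall k : nat, (3 <= k <= N)%N -> 0 < step_ratio t k <= rmax - delta)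
  (htheta : forall n k : nat, (1 <= k <= n)%N -> (n <= N)%N ->
     \sum_(k <= j < n.+1) theta n (n - j)%N * bdf2 t j (j - k)%N
       = (n == k)%:R)
  (n : nat) (omega : nat -> R) (hn : (2 <= n <= N)%N) :
  Cr rmax * delta *
    \sum_(2 <= k < n.+1)
       (dstep t k)^-1 * (\sum_(2 <= j < k.+1) theta k (k - j)%N * omega j) ^+ 2
  <= 2 * \sum_(2 <= k < n.+1)
           omega k * \sum_(2 <= j < k.+1) theta k (k - j)%N * omega j.
Proof.
have s_root := sqrtr_cubic_root (ltW hrmax0) hrmax.
set s := Num.sqrt rmax in s_root.
have s_gt0 : 0 < s by rewrite sqrtr_gt0.
have rmaxE : rmax = s ^+ 2 by rewrite sqr_sqrtr // ltW.
rewrite rmaxE Cr_sqr ?(ltW s_gt0) //; rewrite rmaxE in hr hdelta1.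
have tau_gt0 k : (1 <= k <= N)%N -> 0 < dstep t k.
  by move=> hk; rewrite subr_gt0 ht.
pose v := doc_conv theta 2 omega.
have omegaE k : (2 <= k <= N)%N -> omega k = kernel_conv (bdf2 t) 2 v k.
  move=> hk; rewrite (doc_convK (N := N)) // => n' k' hk' hn'.
  by apply: htheta => //; lia.
pose a k := (dstep t k)^-1 * v k ^+ 2.
pose K := s ^+ 3 / (1 + s ^+ 2); pose C := s / (1 + s ^+ 2) ^+ 2 * delta.
apply: (@le_trans _ _ (C * \sum_(2 <= k < n.+1) a k + (K - C) * a n)).
  have le_CK : C <= K by apply: coercivity_le_energy_const; rewrite // ltW.
  have a_n_ge0 : 0 <= a n.
    by rewrite mulr_ge0 ?sqr_ge0 // invr_ge0 ltW // tau_gt0 //; lia.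
  by rewrite lerDl mulr_ge0 // subr_ge0.
rewrite mulr_sumr.
apply: (telescoping_sum_ge (x := fun k => 2 * (omega k * v k))).
- by case/andP: hn.
- rewrite omegaE ?bdf2_kernel_conv_first; last lia.
  by apply: (bdf2_energy_first s_root); [apply: hr2 | apply: tau_gt0]; lia.
- move=> k /andP[lt2k le_kn].
  rewrite omegaE ?bdf2_kernel_conv_step //; last lia.
  by apply: bdf2_energy_step => //; [lia | apply: tau_gt0 | apply: hr]; lia.
Qed.
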